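(* Let $X$ be an irreducible Markov chain on a finite state space $\overline{F}$ with transition matrix $r$ which is reversible for its stationary distribution $\eta=(\eta_j:j\in\overline{F})$, and let $\boldsymbol{\alpha}=(\alpha_j:j\in\overline{F})\in[0,1]^{\overline{F}}$ be non-zero. Let $r^{(\boldsymbol{\alpha})}_{skip}=(I-rI_{(1-\boldsymbol{\alpha})})^{-1}rI_{\boldsymbol{\alpha}}$ be the modification of $r$ by randomized skipping, and let $r^{(\boldsymbol{\alpha})}_{refl}$ be the modification of $r$ by randomized reflection, i.e. $r^{(\boldsymbol{\alpha})}_{refl}(i,j)=r(i,j)\alpha_j$ for $i\neq j$ and $r^{(\boldsymbol{\alpha})}_{refl}(i,i)=1-\sum_{j\neq i}r(i,j)\alpha_j$. Then $r^{(\boldsymbol{\alpha})}_{refl}\prec_P r^{(\boldsymbol{\alpha})}_{skip}$.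
   Context: $I_{\boldsymbol{\alpha}}$, $I_{(1-\boldsymbol{\alpha})}$ are the diagonal matrices with entries $\alpha_j$, resp. $1-\alpha_j$. Peskun order: for transition matrices $r,r'$ on a finite set $\overline{F}$ with $\xi r=\xi r'=\xi$ for some probability vector $\xi$, one writes $r'\prec_P r$ if $r'(j,i)\le r(j,i)$ for all $i,j\in\overline{F}$ with $i\neq j$. (Both modifications have stationary distribution proportional to $(\eta_j\alpha_j:j\in\overline{F})$.) *)

From HB Require Import structures.
From mathcomp Require Import all_boot all_order all_algebra.
Set Implicit Arguments. Unset Strict Implicit. Unset Printing Implicit Defensive.
Import Order.TTheory GRing.Theory Num.Theory.
Local Open Scope ring_scope.

(* State space \overline{F} = 'I_n ; matrices 'M[R]_n ; probability (row) vectors 'rV[R]_n. *)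

Definition stochastic (R : realFieldType) (n : nat) (r : 'M[R]_n) : Prop :=
  (forall i j, 0 <= r i j) /\ (forall i, \sum_j r i j = 1).

Definition prob_vec (R : realFieldType) (n : nat) (xi : 'rV[R]_n) : Prop :=
  (forall j, 0 <= xi 0 j) /\ \sum_j xi 0 j = 1.

Definition stationary (R : realFieldType) (n : nat) (r : 'M[R]_n) (xi : 'rV[R]_n) : Prop :=
  prob_vec xi /\ xi *m r = xi.

Definition irreducible (R : realFieldType) (n : nat) (r : 'M[R]_n) : Prop :=
  forall i j, exists k : nat, 0 < (r ^+ k) i j.

Definition reversible (R : realFieldType) (n : nat) (r : 'M[R]_n) (eta : 'rV[R]_n) : Prop :=
  forall i j, eta 0 i * r i j = eta 0 j * r j i.

Definition I_alpha (R : realFieldType) (n : nat) (alpha : 'rV[R]_n) : 'M[R]_n :=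
  diag_mx alpha.
Definition I_one_minus_alpha (R : realFieldType) (n : nat) (alpha : 'rV[R]_n) : 'M[R]_n :=
  diag_mx (\row_j (1 - alpha 0 j)).

Definition r_skip (R : realFieldType) (n : nat) (r : 'M[R]_n) (alpha : 'rV[R]_n) : 'M[R]_n :=
  invmx (1%:M - r *m I_one_minus_alpha alpha) *m r *m I_alpha alpha.

Definition r_refl (R : realFieldType) (n : nat) (r : 'M[R]_n) (alpha : 'rV[R]_n) : 'M[R]_n :=
  \matrix_(i, j) if i != j then r i j * alpha 0 j
                 else 1 - \sum_(k | k != i) r i k * alpha 0 k.

Definition peskun_le (R : realFieldType) (n : nat) (r' r : 'M[R]_n) : Prop :=
  (exists xi : 'rV[R]_n, prob_vec xi /\ xi *m r = xi /\ xi *m r' = xi) /\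
  (forall i j : 'I_n, i != j -> r' j i <= r j i).

From HB Require Import structures.
From mathcomp Require Import all_boot all_order all_algebra ring.
Import Order.TTheory GRing.Theory Num.Theory.
Local Open Scope ring_scope.

(* With Q = r I_(1-alpha), the skipping matrix is N r I_alpha where N = (I - Q)^-1
   and N = I + N Q.  Irreducibility and alpha <> 0 give a minimum principle for
   I - Q (a column y with (I - Q) y >= 0 is nonnegative), so I - Q is invertible
   with a nonnegative inverse.  Hence r_skip = r I_alpha + N Q r I_alpha dominates
   r I_alpha, which is r_refl off the diagonal.  The common stationary vector is
   eta I_alpha normalized: for r_skip because eta I_alpha = eta (I - Q), for
   r_refl by detailed balance. *)

Section NonnegativeMatrices.
Context {R : realFieldType}.

Definition nonnegmx {m p} (A : 'M[R]_(m, p)) := forall i j, 0 <= A i j.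

Lemma nonnegmx_mul {m p q} {A : 'M[R]_(m, p)} {B : 'M[R]_(p, q)} :
  nonnegmx A -> nonnegmx B -> nonnegmx (A *m B).
Proof. by move=> A0 B0 i j; rewrite mxE sumr_ge0 // => k _; rewrite mulr_ge0. Qed.

Lemma nonnegmx_exp {n} {A : 'M[R]_n} k : nonnegmx A -> nonnegmx (A ^+ k).
Proof.
move=> A0; elim: k => [|k IHk]; first by move=> i j; rewrite mxE ler0n.
by rewrite exprSr -mulmxE; apply: nonnegmx_mul.
Qed.

Lemma nonnegmx_diag {n} (d : 'rV[R]_n) :
  (forall j, 0 <= d 0 j) -> nonnegmx (diag_mx d).
Proof. by move=> d0 i j; rewrite mxE mulrn_wge0. Qed.

Lemma ler_sum_term {n} {F : 'I_n -> R} j :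
  (forall k, 0 <= F k) -> F j <= \sum_k F k.
Proof. by move=> F0; rewrite (bigD1 j) //= lerDl sumr_ge0. Qed.

Lemma sumr_gt0_exists {n} (F : 'I_n -> R) :
  0 < \sum_k F k -> exists k, 0 < F k.
Proof.
move=> sum_gt0; apply/existsP; apply: contraTT sum_gt0 => /existsPn F_le0.
by rewrite -leNgt sumr_le0 // => k _; rewrite leNgt F_le0.
Qed.

Lemma mulmx_ge_term {m p q} {A : 'M[R]_(m, p)} {B : 'M[R]_(p, q)} i l j :
  nonnegmx A -> nonnegmx B -> A i l * B l j <= (A *m B) i j.
Proof.
by move=> A0 B0; rewrite mxE; apply: ler_sum_term => k; rewrite mulr_ge0.
Qed.

Lemma exprSr_gt0 {n} {A : 'M[R]_n} {k i j} : nonnegmx A ->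
  0 < (A ^+ k.+1) i j -> exists l, 0 < (A ^+ k) i l /\ 0 < A l j.
Proof.
move=> A0; rewrite exprSr -mulmxE mxE => /sumr_gt0_exists [l Pl].
exists l; have Ak0 := nonnegmx_exp k A0.
by rewrite !lt0r !(Ak0, A0) !andbT; apply/andP; rewrite -negb_or -mulf_eq0 gt_eqF.
Qed.

Lemma irreducible_exprS_gt0 {n} {A : 'M[R]_n} : stochastic A -> irreducible A ->
  forall i j, exists k, 0 < (A ^+ k.+1) i j.
Proof.
move=> [A0 A1] A_irr i j.
have [l Ail] : exists l, 0 < A i l by apply: sumr_gt0_exists; rewrite A1 ltr01.
have [k Akl] := A_irr l j; exists k.
rewrite exprS -mulmxE; apply: lt_le_trans (mulmx_ge_term i l j A0 (nonnegmx_exp k A0)).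
exact: mulr_gt0.
Qed.

Lemma stationary_gt0 {n} {A : 'M[R]_n} {xi : 'rV[R]_n} :
  stochastic A -> irreducible A -> stationary A xi -> forall j, 0 < xi 0 j.
Proof.
move=> [A0 _] A_irr [[xi0 xi1] xiA] j.
have xiAk k : xi *m A ^+ k = xi.
  by elim: k => [|k IHk]; rewrite ?expr0 ?mulmx1 // exprSr -mulmxE mulmxA IHk.
have [i xi_i] : exists i, 0 < xi 0 i by apply: sumr_gt0_exists; rewrite xi1 ltr01.
have [k Aij] := A_irr i j.
have xi_ge0 : nonnegmx xi by move=> i' l; rewrite [i']ord1.
rewrite -(xiAk k); apply: lt_le_trans (mulmx_ge_term 0 i j xi_ge0 (nonnegmx_exp k A0)).
exact: mulr_gt0.
Qed.

Lemma prob_vec_normalize {n} (v : 'rV[R]_n) :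
  (forall j, 0 <= v 0 j) -> 0 < \sum_j v 0 j ->
  prob_vec ((\sum_j v 0 j)^-1 *: v).
Proof.
move=> v0 sum_gt0; split=> [j|].
  by rewrite mxE mulr_ge0 // invr_ge0 ltW.
by under eq_bigr do rewrite mxE; rewrite -mulr_sumr mulVf ?gt_eqF.
Qed.

Lemma nonneg_row_neq0_gt0 {n} {v : 'rV[R]_n} :
  (forall j, 0 <= v 0 j) -> v != 0 -> exists j, 0 < v 0 j.
Proof.
move=> v0 v_neq0; apply/existsP; apply: contraNT v_neq0 => /existsPn v_le0.
by apply/eqP/matrixP => i j; rewrite [i]ord1 mxE; apply/le_anti; rewrite v0 leNgt v_le0.
Qed.

End NonnegativeMatrices.

Section RandomizedModifications.
Context {R : realFieldType} {n : nat} {r : 'M[R]_n} {alpha : 'rV[R]_n}.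

Local Notation Q := (r *m I_one_minus_alpha alpha).

Lemma I_alphaE (u : 'rV[R]_n) k : (u *m I_alpha alpha) 0 k = u 0 k * alpha 0 k.
Proof. by rewrite mul_mx_diag mxE. Qed.

Lemma r_I_one_minus_alphaE i k : Q i k = r i k * (1 - alpha 0 k).
Proof. by rewrite mul_mx_diag !mxE. Qed.

Lemma I_sub_I_one_minus_alpha : 1%:M - I_one_minus_alpha alpha = I_alpha alpha.
Proof.
by apply/matrixP => i j; rewrite !mxE; case: (i == j); rewrite ?mulr1n ?mulr0n; ring.
Qed.

Lemma r_skip_stationary (eta : 'rV[R]_n) : eta *m r = eta -> (1%:M - Q) \in unitmx ->
  (eta *m I_alpha alpha) *m r_skip r alpha = eta *m I_alpha alpha.
Proof.
move=> eta_r M_unit.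
have etaM : eta *m I_alpha alpha = eta *m (1%:M - Q).
  by rewrite -I_sub_I_one_minus_alpha !mulmxBr !mulmx1 mulmxA eta_r.
by rewrite /r_skip !mulmxA {1}etaM -(mulmxA eta) mulmxV // mulmx1 eta_r.
Qed.

Lemma r_refl_stationary (eta : 'rV[R]_n) : reversible r eta ->
  (eta *m I_alpha alpha) *m r_refl r alpha = eta *m I_alpha alpha.
Proof.
move=> eta_rev; apply/matrixP => i j; rewrite [i]ord1 mxE I_alphaE.
under eq_bigr => k _ do rewrite I_alphaE mxE.
rewrite (bigD1 j) //= eqxx /=.
rewrite [X in _ + X](eq_bigr (fun k => eta 0 j * alpha 0 j * (r j k * alpha 0 k))).
  by rewrite -mulr_sumr; ring.
by move=> k ->; rewrite mulrACA eta_rev; ring.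
Qed.

Hypothesis r_stoch : stochastic r.
Hypothesis alpha01 : forall j, 0 <= alpha 0 j <= 1.

(* Expanding (I - Q) y at i against sum_k r i k = 1 gives a sum of nonnegative
   terms whose vanishing forces both conclusions. *)
Lemma min_point_successor {y : 'cV[R]_n} {i j} :
  (forall k, y i 0 <= y k 0) -> y i 0 < 0 -> 0 <= ((1%:M - Q) *m y) i 0 ->
  0 < r i j -> y j 0 = y i 0 /\ alpha 0 j = 0.
Proof.
have [r0 r1] := r_stoch; set m := y i 0 => y_min m_lt0 My_ge0 rij.
pose d k := r i k * (1 - alpha 0 k) * (y k 0 - m) + - m * (r i k * alpha 0 k).
have d_ge0 k : 0 <= d k.
  have /andP [a0 a1] := alpha01 k.
  by rewrite addr_ge0 ?mulr_ge0 ?r0 ?subr_ge0 ?y_min // oppr_ge0 ltW.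
have d_sum : \sum_k d k = 0.
  apply/le_anti; rewrite sumr_ge0 // andbT.
  have -> : \sum_k d k = \sum_k Q i k * y k 0 - m * \sum_k r i k.
    by rewrite mulr_sumr -sumrB; apply: eq_bigr => k _; rewrite r_I_one_minus_alphaE /d; ring.
  by move: My_ge0; rewrite mulmxBl mul1mx !mxE r1 mulr1 subr_ge0 subr_le0.
have /andP [a0 a1] := alpha01 j.
have /eqP := psumr_eq0P (fun k _ => d_ge0 k) d_sum (i := j) isT.
rewrite paddr_eq0 ?mulr_ge0 ?r0 ?subr_ge0 ?y_min // ?oppr_ge0 ?ltW //.
rewrite !mulf_eq0 oppr_eq0 (lt_eqF m_lt0) (gt_eqF rij) /= => /andP [+ /eqP aj0].
by rewrite aj0 subr0 oner_eq0 subr_eq0 /= => /eqP.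
Qed.

Hypothesis r_irr : irreducible r.
Context {j0 : 'I_n}.
Hypothesis alpha_j0 : 0 < alpha 0 j0.

(* At a negative minimum of y the minimum spreads along the chain and forbids
   entering a state with alpha > 0; irreducibility reaches j0 anyway. *)
Lemma minimum_principle (y : 'cV[R]_n) :
  (forall i, 0 <= ((1%:M - Q) *m y) i 0) -> forall i, 0 <= y i 0.
Proof.
move=> My_ge0 i; rewrite leNgt; apply/negP => yi_lt0.
have [r0 _] := r_stoch.
case: (arg_minP (fun k => y k 0) (isT : xpredT i)) => i0 _ y_min.
set m := y i0 0 in y_min *.
have m_lt0 : m < 0 by apply: le_lt_trans (y_min i _) yi_lt0.
have succ l j : y l 0 = m -> 0 < r l j -> y j 0 = m /\ alpha 0 j = 0.
  move=> yl rlj; have l_min k : y l 0 <= y k 0 by rewrite yl y_min.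
  by rewrite -yl; apply: (min_point_successor l_min _ (My_ge0 l) rlj); rewrite yl.
have spread k l : 0 < (r ^+ k) i0 l -> y l 0 = m.
  elim: k l => [|k IHk] l; first by rewrite mxE; case: eqP => [<-|]; rewrite ?ltxx.
  by case/exprSr_gt0 => // l' [/IHk yl' /(succ _ _ yl') []].
have [k /(exprSr_gt0 r0) [l [/spread yl /(succ _ _ yl) [_ aj0]]]] :=
  irreducible_exprS_gt0 r_stoch r_irr i0 j0.
by move: alpha_j0; rewrite aj0 ltxx.
Qed.

Lemma unitmx_skip : (1%:M - Q) \in unitmx.
Proof.
rewrite unitmxE unitfE -det_tr; apply/negP => /det0P [v /negP v_neq0 vM].
apply: v_neq0; have Mv : (1%:M - Q) *m v^T = 0.
  by rewrite -[_ - _]trmxK -trmx_mul vM trmx0.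
apply/eqP/matrixP => i j; rewrite [i]ord1 mxE; apply/le_anti/andP; split.
- have := minimum_principle (- v^T) _ j; rewrite !mxE oppr_ge0; apply=> k.
  by rewrite mulmxN Mv oppr0 mxE.
- by have := minimum_principle (v^T) _ j; rewrite mxE; apply=> k; rewrite Mv mxE.
Qed.

Lemma invmx_skip_nonneg : nonnegmx (invmx (1%:M - Q)).
Proof.
move=> i k; have := minimum_principle (col k (invmx (1%:M - Q))) _ i.
rewrite mxE; apply=> l.
by rewrite colE mulmxA mulmxV ?unitmx_skip // mul1mx mxE ler0n.
Qed.

Lemma r_refl_le_r_skip i j : i != j -> r_refl r alpha j i <= r_skip r alpha j i.
Proof.
have [r0 _] := r_stoch; set N := invmx (1%:M - Q) => ij.
have NQ : N = 1%:M + N *m Q.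
  by rewrite -[1%:M](mulVmx unitmx_skip) mulmxBr mulmx1 subrK.
have A0 : nonnegmx (I_alpha alpha) by apply: nonnegmx_diag => k; case/andP: (alpha01 k).
have B0 : nonnegmx (I_one_minus_alpha alpha).
  by apply: nonnegmx_diag => k; rewrite mxE subr_ge0; case/andP: (alpha01 k).
rewrite /r_refl /r_skip mxE eq_sym ij -/N NQ !mulmxDl mul1mx mxE mul_mx_diag mxE lerDl.
have NQ0 := nonnegmx_mul invmx_skip_nonneg (nonnegmx_mul r0 B0).
exact: nonnegmx_mul (nonnegmx_mul NQ0 r0) A0 j i.
Qed.

End RandomizedModifications.

Theorem proposition2p10 (R : realFieldType) (n : nat) (r : 'M[R]_n)
  (eta : 'rV[R]_n) (alpha : 'rV[R]_n) :
  stochastic r ->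
  irreducible r ->
  stationary r eta ->
  reversible r eta ->
  (forall j, 0 <= alpha 0 j <= 1) ->
  alpha != 0 ->
  peskun_le (r_refl r alpha) (r_skip r alpha).
Proof.
move=> r_stoch r_irr eta_stat eta_rev alpha01 alpha_neq0.
have a0 j : 0 <= alpha 0 j by case/andP: (alpha01 j).
have [j0 alpha_j0] := nonneg_row_neq0_gt0 a0 alpha_neq0.
have eta_gt0 := stationary_gt0 r_stoch r_irr eta_stat.
set w := eta *m I_alpha alpha.
have w0 j : 0 <= w 0 j by rewrite /w I_alphaE mulr_ge0 ?a0 ?ltW ?eta_gt0.
have w_sum : 0 < \sum_j w 0 j.
  by apply: lt_le_trans (ler_sum_term j0 w0); rewrite /w I_alphaE mulr_gt0.
split; last exact: (r_refl_le_r_skip r_stoch alpha01 r_irr alpha_j0).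
exists ((\sum_j w 0 j)^-1 *: w); split; first exact: prob_vec_normalize.
rewrite -!scalemxAl r_refl_stationary // r_skip_stationary //; first by case: eta_stat.
exact: (unitmx_skip r_stoch alpha01 r_irr alpha_j0).
Qed.
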